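(* Let $n\ge 1$, let $z_1,\dots,z_n$ be distinct integers none of which is $1$ or $-1$, and let $D=\{1,-1,z_1,\dots,z_n\}$. Then $diam(D)=2$ if $n=1$, $diam(D)=3$ if $n=2$, and $diam(D)=4$ if $n>2$.
   Context: A signed tree is a pair $(T,s)$ where $T$ is a finite tree and $s:E(T)\to\{+,-\}$. The signed degree $sdeg(v)$ of a vertex is the number of incident positive edges minus the number of incident negative edges. $(T,s)$ realizes (satisfies) a set $D$ of integers if $D=\{sdeg(v):v\in V(T)\}$. For a set $D$ containing $1$ or $-1$, $diam(D)=\min\{diam(T): \text{some signed tree }(T,s)\text{ realizes }D\}$, where $diam(T)$ is the diameter of the tree $T$. *)

From mathcomp Require Import all_boot all_order all_algebra.
Set Implicit Arguments. Unset Strict Implicit. Unset Printing Implicit Defensive.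
Import Order.TTheory GRing.Theory Num.Theory.

(* A signed tree is (T, s) with T a tree (connected, acyclic)
   and s a sign on edges (true = +, false = -), given as a symmetric function
   of the endpoints (only its values on edges matter). *)

Definition connected_graph (m : nat) (e : rel 'I_m) : Prop :=
  forall u v : 'I_m, connect e u v.

Definition acyclic_graph (m : nat) (e : rel 'I_m) : Prop :=
  forall p : seq 'I_m, uniq p -> 2 < size p -> ~~ cycle e p.

Definition is_tree (m : nat) (e : rel 'I_m) : Prop :=
  symmetric e /\ irreflexive e /\ connected_graph e /\ acyclic_graph e.

Definition signed_tree (m : nat) (e : rel 'I_m) (s : 'I_m -> 'I_m -> bool) : Prop :=
  is_tree e /\ (forall u v, s u v = s v u).

Definition sdeg (m : nat) (e : rel 'I_m) (s : 'I_m -> 'I_m -> bool) (v : 'I_m) : int :=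
  (\sum_(u : 'I_m | e v u) (if s v u then 1 else -1))%R.

Definition realizes (m : nat) (e : rel 'I_m) (s : 'I_m -> 'I_m -> bool) (D : seq int) : Prop :=
  forall d : int, d \in D <-> exists v : 'I_m, sdeg e s v = d.

(* graph distance: least k such that a walk with k edges joins u to v
   (in a connected graph on m vertices it is < m) *)
Definition walk_of_len (m : nat) (e : rel 'I_m) (u v : 'I_m) (k : nat) : bool :=
  [exists p : k.-tuple 'I_m, path e u p && (last u p == v)].

Definition dist (m : nat) (e : rel 'I_m) (u v : 'I_m) : nat :=
  find (walk_of_len e u v) (iota 0 m).

Definition diameter (m : nat) (e : rel 'I_m) : nat :=
  \max_(u : 'I_m) \max_(v : 'I_m) dist e u v.

Definition diam_of_set_is (D : seq int) (k : nat) : Prop :=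
  (exists (m : nat) (e : rel 'I_m) (s : 'I_m -> 'I_m -> bool),
      signed_tree e s /\ realizes e s D /\ diameter e = k) /\
  (forall (m : nat) (e : rel 'I_m) (s : 'I_m -> 'I_m -> bool),
      signed_tree e s -> realizes e s D -> k <= diameter e).

From mathcomp Require Import all_boot all_order all_algebra zify.
Set Implicit Arguments. Unset Strict Implicit. Unset Printing Implicit Defensive.
Import Order.TTheory GRing.Theory Num.Theory.

(* Lower bound: a leaf has signed degree 1 or -1, so every vertex realizing
   some z_i has two neighbours.  In a tree a simple path is the only path
   between its ends, hence a geodesic, and a simple path joining two such
   vertices extends by one edge at each end.  One such vertex thus gives
   diameter >= 2, two distinct ones give >= 3, and three of them, which cannot
   be pairwise adjacent in a tree, give two at distance >= 2, hence >= 4.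
   Upper bound: join a root of signed degree z_1 by positive edges to vertices
   of signed degrees z_2, ..., z_n, and adjust every signed degree by hanging
   pendant leaves of both signs; the leaves realize 1 and -1, and every vertex
   is within distance 1 of the core, whose diameter is min(n - 1, 2). *)

Lemma last_rev_belast (T : Type) (x : T) p : last (last x p) (rev (belast x p)) = x.
Proof. by rewrite -(last_cons x) -rev_rcons -lastI rev_cons last_rcons. Qed.

Section Walks.
Variables (m : nat) (e : rel 'I_m).

Lemma walk_of_len0 u : walk_of_len e u u 0.
Proof. by apply/existsP; exists [tuple]; rewrite /= eqxx. Qed.

Lemma walk_of_lenS u v w j :
  e u v -> walk_of_len e v w j -> walk_of_len e u w j.+1.
Proof.
move=> huv /existsP[t /andP[ht hl]]; apply/existsP; exists [tuple of v :: t].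
by rewrite /= huv ht.
Qed.

Lemma walk_of_len1 u v : e u v -> walk_of_len e u v 1.
Proof. by move/walk_of_lenS; apply; apply: walk_of_len0. Qed.

Lemma walk_of_len_cat u v w j l :
  walk_of_len e u v j -> walk_of_len e v w l -> walk_of_len e u w (j + l).
Proof.
move=> /existsP[t /andP[ht /eqP htv]] /existsP[t' /andP[ht' ht'w]].
apply/existsP; exists [tuple of t ++ t'].
by rewrite cat_path last_cat htv ht ht'.
Qed.

Lemma walk_of_len_sym u v j : symmetric e ->
  walk_of_len e u v j -> walk_of_len e v u j.
Proof.
move=> e_sym /existsP[t /andP[ht /eqP <-]]; apply/existsP.
exists [tuple of rev (belast u t)]; rewrite /= last_rev_belast eqxx andbT.
by rewrite rev_path (eq_path (e' := e)).
Qed.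

Lemma dist_le_walk u v j : walk_of_len e u v j -> dist e u v <= j.
Proof.
move=> huv; rewrite /dist; case: (ltnP j m) => hjm; last first.
  by apply: leq_trans (find_size _ _) _; rewrite size_iota.
case: leqP => // hj.
by have := before_find 0 hj; rewrite nth_iota // add0n huv.
Qed.

(* [dist] returns [m] when no walk of length below [m] exists. *)
Lemma dist_ge_walks u v j : j <= m ->
  (forall k, walk_of_len e u v k -> j <= k) -> j <= dist e u v.
Proof.
move=> hjm hwalk; rewrite /dist; case: ltnP => // hfind.
have hhas : has (walk_of_len e u v) (iota 0 m).
  by rewrite has_find size_iota (leq_trans hfind).
have hfm : find (walk_of_len e u v) (iota 0 m) < m.
  by rewrite -[m in _ < m](size_iota 0) -has_find.
have := nth_find 0 hhas; rewrite nth_iota // add0n => /hwalk.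
by rewrite leqNgt hfind.
Qed.

Lemma dist_le_diameter u v : dist e u v <= diameter e.
Proof.
apply: leq_trans (leq_bigmax u); exact: (leq_bigmax (F := fun v => dist e u v)).
Qed.

Lemma diameter_le_walks d :
  (forall u v, exists2 j, j <= d & walk_of_len e u v j) -> diameter e <= d.
Proof.
move=> hwalk; apply/bigmax_leqP => u _; apply/bigmax_leqP => v _.
by have [j hjd /dist_le_walk] := hwalk u v; move/leq_trans; apply.
Qed.

End Walks.

Section Trees.
Variables (m : nat) (e : rel 'I_m).
Hypotheses (e_sym : symmetric e) (e_irr : irreflexive e) (e_acyc : acyclic_graph e).

Lemma upath_rev x p : path e x p -> uniq (x :: p) ->
  [/\ path e (last x p) (rev (belast x p)), uniq (last x p :: rev (belast x p))
    & last (last x p) (rev (belast x p)) = x].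
Proof.
move=> hp hu; split; last exact: last_rev_belast.
  by rewrite rev_path (eq_path (e' := e)).
by rewrite -rev_rcons -lastI rev_uniq.
Qed.

Lemma walk_neighbours_through x a b r : e x a -> e x b -> a != b ->
  path e a r -> last a r = b -> x \in a :: r.
Proof.
move=> hxa hxb hab har hlast; apply: contraT => hx; move: hlast.
case: (shortenP har) => r' hr' hu' hsub.
case: r' hr' hu' hsub => [|c r'] hr' hu' hsub hlast; first by rewrite -hlast eqxx in hab.
have hxr : x \notin a :: c :: r'.
  apply: contra hx; rewrite !inE => /orP[-> // | /hsub ->]; exact: orbT.
have hcyc : cycle e (x :: a :: c :: r').
  by move: hr' hlast => /= /andP[-> hcr] hlast; rewrite hxa rcons_path hcr hlast e_sym hxb.
have hu : uniq (x :: a :: c :: r') by rewrite cons_uniq hxr.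
by have /negP := e_acyc hu isT.
Qed.

Lemma upath_unique x p q : path e x p -> uniq (x :: p) ->
  path e x q -> uniq (x :: q) -> last x p = last x q -> p = q.
Proof.
elim: p x q => [|a p IHp] x [|b q] //=.
- by move=> _ _ _ /andP[hxq _] hx; rewrite hx mem_last in hxq.
- by move=> _ /andP[hxp _] _ _ hx; rewrite -hx mem_last in hxp.
move=> /andP[hxa hap] /andP[hxap hup] /andP[hxb hbq] /andP[hxbq huq] hpq.
have [hab | hab] := eqVneq a b; first by subst b; rewrite (IHp a q).
have [hqrev _ hqlast] := upath_rev hbq huq.
have := walk_neighbours_through (r := p ++ rev (belast b q)) hxa hxb hab.
rewrite cat_path hap last_cat hpq hqrev hqlast => /(_ isT erefl).
rewrite -cat_cons mem_cat (negbTE hxap) mem_rev.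
by move=> /mem_belast; rewrite (negbTE hxbq).
Qed.

Lemma upath_size_le_walk x p k : path e x p -> uniq (x :: p) ->
  walk_of_len e x (last x p) k -> size p <= k.
Proof.
move=> hp hu /existsP[t /andP[ht /eqP]].
case: (shortenP ht) => p' hp' hu' hsub hlast.
rewrite -(upath_unique hp' hu' hp hu hlast) -(size_tuple t).
by apply: uniq_leq_size hsub; case/andP: hu'.
Qed.

Lemma upath_size_le_diameter x p : path e x p -> uniq (x :: p) -> size p <= diameter e.
Proof.
move=> hp hu; apply: leq_trans (dist_le_diameter e x (last x p)).
apply: dist_ge_walks => [|k]; last exact: upath_size_le_walk.
by have := max_card (mem (x :: p)); rewrite card_ord (card_uniqP hu) => /ltnW.
Qed.

Definition inner_vertex v := exists a b, [/\ a != b, e v a & e v b].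

(* If [w] lay on [p], the part of [p] from its head to [w] would join two
   neighbours of [x] while avoiding [x]. *)
Lemma upath_extend x p w : path e x p -> uniq (x :: p) ->
  e w x -> w != head x p -> path e w (x :: p) && uniq (w :: x :: p).
Proof.
move=> hp hu hwx hwh; rewrite [path _ _ _]/= hwx hp cons_uniq hu andbT inE negb_or.
have -> /= : w != x by apply: contraTneq hwx => ->; rewrite e_irr.
case: p hp hu hwh => [|c p] //= /andP[hxc hcp] /andP[hxcp _] hwc.
rewrite inE negb_or hwc andbT /=; apply/negP => hwp; move: hcp hxcp.
case/splitPr: hwp => p1 p2; rewrite cat_path /= => /and3P[hcp1 hlw _].
have : x \in c :: rcons p1 w.
  apply: (walk_neighbours_through hxc); rewrite ?last_rcons //.
  - by rewrite e_sym.
  - by rewrite eq_sym.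
  - by rewrite rcons_path hcp1.
by rewrite -cats1 -!cat_cons !mem_cat !inE => /orP[->|->]; rewrite ?orbT.
Qed.

Lemma inner_upath_extend x p : inner_vertex x -> path e x p -> uniq (x :: p) ->
  exists w, path e w (x :: p) && uniq (w :: x :: p).
Proof.
move=> [a [b [hab hxa hxb]]] hp hu.
have [ha | ha] := eqVneq a (head x p).
  by exists b; apply: upath_extend; rewrite // 1?e_sym // -ha eq_sym.
by exists a; apply: upath_extend; rewrite // e_sym.
Qed.

Lemma inner_upath_size_le_diameter x p : inner_vertex x -> inner_vertex (last x p) ->
  path e x p -> uniq (x :: p) -> (size p).+2 <= diameter e.
Proof.
move=> hx hy hp hu.
have [w /andP[hwp hwu]] := inner_upath_extend hx hp hu.
have [hq hqu _] := upath_rev hwp hwu.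
have [w' /andP[hw'q hw'u]] := inner_upath_extend hy hq hqu.
by have := upath_size_le_diameter hw'q hw'u; rewrite /= size_rev /= size_belast.
Qed.

Hypothesis e_conn : connected_graph e.

(* The length of the simple path from [u] to [v] (0, 1 or at least 2), plus
   one extension at each end. *)
Lemma inner_pair_le_diameter u v : inner_vertex u -> inner_vertex v ->
  (if u == v then 2 else if e u v then 3 else 4) <= diameter e.
Proof.
move=> hu hv; have /connectP[p0 hp0 hv0] := e_conn u v.
case: (shortenP hp0) hv0 => p hp hup _ hlast; subst v.
apply: leq_trans (inner_upath_size_le_diameter hu hv hp hup).
case: p hp {hv hup} => [|c [|d p]] /=; rewrite ?eqxx //.
  by case/andP=> ->; case: ifP.
by case: ifP => // _; case: ifP.
Qed.

Lemma inner_triple_le_diameter u v w : inner_vertex u -> inner_vertex v -> inner_vertex w ->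
  u != v -> v != w -> u != w -> 4 <= diameter e.
Proof.
move=> hu hv hw huv hvw huw.
have pair_le a b : inner_vertex a -> inner_vertex b -> a != b -> ~~ e a b -> 4 <= diameter e.
  move=> ha hb hab hnab; have := inner_pair_le_diameter ha hb.
  by rewrite (negbTE hab) (negbTE hnab).
have [euv | /(pair_le _ _ hu hv huv)//] := boolP (e u v).
have [evw | /(pair_le _ _ hv hw hvw)//] := boolP (e v w).
have [euw | /(pair_le _ _ hu hw huw)//] := boolP (e u w).
have huniq : uniq [:: u; v; w] by rewrite /= !inE !negb_or huv huw hvw.
by have /negP := e_acyc huniq isT; rewrite /= euv evw e_sym euw.
Qed.

Lemma inner_vertex_sdeg (s : 'I_m -> 'I_m -> bool) v w : w != v ->
  sdeg e s v != 1%R -> sdeg e s v != (-1)%R -> inner_vertex v.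
Proof.
move=> hwv hv1 hvN1.
have [a hva] : exists a, e v a.
  have /connectP[[|a p] /=] := e_conn v w; first by move=> _ hw; rewrite hw eqxx in hwv.
  by case/andP=> hva _ _; exists a.
have [b /andP[hvb hba] | hnob] := pickP [pred b | e v b && (b != a)].
  by exists b, a.
suff hsdeg : sdeg e s v = (if s v a then 1 else -1)%R.
  by move: hv1 hvN1; rewrite hsdeg; case: (s v a); rewrite eqxx.
rewrite /sdeg (big_pred1 a) // => u /=.
have [-> | hua] := eqVneq u a; first by rewrite hva.
by have := hnob u; rewrite /= hua andbT.
Qed.

End Trees.

Lemma realized_inner m (e : rel 'I_m) s (z : seq int) x :
  signed_tree e s -> realizes e s [:: 1, -1 & z]%R ->
  x \in z -> x != 1%R -> x != (-1)%R -> exists2 v, sdeg e s v = x & inner_vertex e v.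
Proof.
case=> -[_ [_ [e_conn _]]] _ hD hx hx1 hxN1.
have [w hw] : exists w, sdeg e s w = 1%R by apply/hD; rewrite inE eqxx.
have [v hv] : exists v, sdeg e s v = x by apply/hD; rewrite !inE hx !orbT.
exists v => //; apply: (inner_vertex_sdeg e_conn (s := s) (w := w)); rewrite ?hv //.
by apply: contra_neq hx1 => hwv; rewrite -hv -hwv.
Qed.

Lemma diameter_lower_bound m (e : rel 'I_m) s (z : seq int) :
  signed_tree e s -> realizes e s [:: 1, -1 & z]%R -> uniq z -> z != [::] ->
  (forall x, x \in z -> x != 1%R /\ x != (-1)%R) -> (minn (size z) 3).+1 <= diameter e.
Proof.
move=> htree hD hu hz0 hz; have [[e_sym [e_irr [e_conn e_acyc]]] _] := htree.
have inner_of x : x \in z -> exists2 v, sdeg e s v = x & inner_vertex e v.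
  by move=> hx; have [hx1 hxN1] := hz x hx; apply: realized_inner htree hD hx hx1 hxN1.
have vertex_neq (d d' : int) (u u' : 'I_m) :
    d != d' -> sdeg e s u = d -> sdeg e s u' = d' -> u != u'.
  by move=> hdd' hud hud'; apply: contra_neq hdd' => huu'; rewrite -hud -hud' huu'.
have pair_le := inner_pair_le_diameter e_sym e_irr e_acyc e_conn.
clear hz hD; case: z hu hz0 inner_of => [|z1 [|z2 [|z3 z]]] //= hu _ inner_of.
- have [v _ hv] := inner_of z1 (mem_head _ _).
  by have := pair_le _ _ hv hv; rewrite eqxx.
- have [v hv1 hv] := inner_of z1 (mem_head _ _).
  have /inner_of[v' hv2 hv'] : z2 \in [:: z1; z2] by rewrite !inE eqxx orbT.
  have hvv' : v != v' by apply: vertex_neq hv1 hv2; move: hu; rewrite /= inE andbT.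
  by apply: leq_trans (pair_le _ _ hv hv'); rewrite (negbTE hvv'); case: ifP.
have [v hv1 hv] := inner_of z1 (mem_head _ _).
have /inner_of[v' hv2 hv'] : z2 \in [:: z1, z2, z3 & z] by rewrite !inE eqxx orbT.
have /inner_of[v'' hv3 hv''] : z3 \in [:: z1, z2, z3 & z] by rewrite !inE eqxx !orbT.
move: hu => /and3P[]; rewrite !inE !negb_or => /and3P[h12 h13 _] /andP[h23 _] _.
apply: leq_trans (_ : 4 <= _); first by rewrite ltnS geq_minr.
apply: (inner_triple_le_diameter e_sym e_irr e_acyc e_conn hv hv' hv'').
- exact: vertex_neq h12 hv1 hv2.
- exact: vertex_neq h23 hv2 hv3.
- exact: vertex_neq h13 hv1 hv3.
Qed.

Definition sgnb (b : bool) : int := if b then 1%R else (-1)%R.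

(* The tree coded by [ps] has root 0, and vertex [j.+1] hangs below vertex
   [(nth _ ps j).1] by an edge of sign [(nth _ ps j).2]. *)
Section ParentTree.
Variable ps : seq (nat * bool).
Local Notation V := 'I_(size ps).+1.

Definition ptree_parent (v : nat) : nat := if v is j.+1 then (nth (0, true) ps j).1 else 0.
Definition ptree_sign (v : nat) : bool := if v is j.+1 then (nth (0, true) ps j).2 else true.

Definition ptree_edge : rel V :=
  fun u v => (u != v) && (ptree_parent (maxn u v) == minn u v).
Definition ptree_signs : V -> V -> bool := fun u v => ptree_sign (maxn u v).

Lemma ptree_edge_sym : symmetric ptree_edge.
Proof. by move=> u v; rewrite /ptree_edge maxnC minnC eq_sym. Qed.

Lemma ptree_edge_irr : irreflexive ptree_edge.
Proof. by move=> u; rewrite /ptree_edge eqxx. Qed.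

Lemma ptree_edge_lt (u v : V) : u < v -> ptree_edge u v = (ptree_parent v == u).
Proof.
move=> huv; rewrite /ptree_edge (maxn_idPr (ltnW huv)) (minn_idPl (ltnW huv)).
by rewrite -(inj_eq val_inj) (ltn_eqF huv).
Qed.

Hypothesis parent_lt : forall v, 0 < v -> ptree_parent v < v.

Lemma ptree_parent_le v : ptree_parent v <= v.
Proof. by case: v => // v; apply/ltnW/parent_lt. Qed.

Lemma ptree_parent_neq x y : x < y -> (ptree_parent x == y) = false.
Proof. by move=> hxy; rewrite ltn_eqF // (leq_ltn_trans (ptree_parent_le x)). Qed.

Lemma ptree_edge_parent (u w : V) : 0 < u -> w = ptree_parent u :> nat -> ptree_edge u w.
Proof. by move=> hu hw; rewrite ptree_edge_sym ptree_edge_lt hw ?parent_lt. Qed.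

Lemma ptree_connect0 (u : V) : connect ptree_edge u ord0.
Proof.
have [k] := ubnP (val u); elim: k u => // k IHk u hu.
have [u0 | hu0] := posnP u; first by rewrite (_ : u = ord0) //; apply: val_inj.
have hpu := parent_lt hu0.
have hw : ptree_parent u < (size ps).+1 := ltn_trans hpu (ltn_ord u).
apply: connect_trans (connect1 _) (IHk (Ordinal hw) (leq_trans hpu _)) => //.
exact: ptree_edge_parent.
Qed.

Lemma ptree_connected : connected_graph ptree_edge.
Proof.
move=> u v; apply: connect_trans (ptree_connect0 u) _.
by rewrite (sym_connect_sym ptree_edge_sym) ptree_connect0.
Qed.

(* The largest vertex of a cycle would have both its cycle neighbours as parent. *)
Lemma ptree_acyclic : acyclic_graph ptree_edge.
Proof.
case=> [|x0 p0] // hu hs; apply/negP => hc.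
have [v hv hmax] := @arg_maxnP _ x0 (mem (x0 :: p0)) val (mem_head _ _).
case: (rot_to hv) hu hs hc => i q hrot.
rewrite -(rot_uniq i) -(size_rot i (x0 :: p0)) -(rot_cycle i) hrot.
have lt_v w : w \in q -> v \notin q -> val w < val v.
  move=> hwq hvq; rewrite ltn_neqAle (inj_eq val_inj); apply/andP; split.
    by apply: contraNneq hvq => <-.
  by apply: hmax; rewrite inE -(mem_rot i) hrot inE hwq orbT.
case: q hrot lt_v => [|a [|b q]] // _ lt_v.
rewrite cons_uniq => /andP[hvq /andP[haq _]] _.
rewrite /cycle rcons_path => /andP[/andP[hva _] hlv].
rewrite ptree_edge_sym ptree_edge_lt ?lt_v ?mem_head // in hva.
have hl : last b q \in [:: a, b & q] by rewrite inE mem_last orbT.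
rewrite ptree_edge_lt ?(lt_v _ hl) // in hlv.
have hal : a = last b q by apply: val_inj; rewrite /= -(eqP hva) (eqP hlv).
by rewrite hal mem_last in haq.
Qed.

Lemma ptree_signed_tree : signed_tree ptree_edge ptree_signs.
Proof.
split; last by move=> u v; rewrite /ptree_signs maxnC.
do !split; [exact: ptree_edge_sym | exact: ptree_edge_irr | exact: ptree_connected
  | exact: ptree_acyclic].
Qed.

Lemma sdeg_ptree (v : V) : sdeg ptree_edge ptree_signs v =
  ((if (0 < v)%N then sgnb (ptree_sign v) else 0) + \sum_(x <- ps | x.1 == v) sgnb x.2)%R.
Proof.
rewrite /sdeg big_mkcond /=.
transitivity (\sum_(u : V)
   ((if (0 < v)%N && (u == ptree_parent v :> nat) then sgnb (ptree_sign v) else 0)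
  + (if (0 < u)%N && (ptree_parent u == v) then sgnb (ptree_sign u) else 0)))%R.
  apply: eq_bigr => u _; rewrite /ptree_signs.
  case: (ltngtP u v) => [huv|hvu|/ord_inj ->].
  - rewrite ptree_edge_sym ptree_edge_lt // (ptree_parent_neq huv) andbF addr0.
    by rewrite (leq_ltn_trans (leq0n u) huv) eq_sym.
  - rewrite ptree_edge_lt // (leq_ltn_trans (leq0n v) hvu) /=.
    by rewrite [_ == ptree_parent v]eq_sym (ptree_parent_neq hvu) andbF add0r.
  rewrite ptree_edge_irr.
  by case: posnP => //= /parent_lt /ltn_eqF hv; rewrite eq_sym hv addr0.
rewrite big_split /=; congr (_ + _)%R.
  case: posnP => [_|hv]; first by rewrite big1.
  rewrite -big_mkcond /= (big_ord1_eq _ (fun=> sgnb (ptree_sign v))).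
  by rewrite (ltn_trans (parent_lt hv) (ltn_ord v)).
rewrite big_ord_recl /= add0r (big_nth (0, true)) big_mkord [RHS]big_mkcond.
by apply: eq_bigr => i _; rewrite add0n.
Qed.
End ParentTree.

(* Numbers of positive and negative leaves adding [t] to a signed degree;
   there is always one leaf of each sign, so that 1 and -1 are realized. *)
Definition npos (t : int) : nat := (if (0 <= t)%R then `|t|%N else 0) + 1.
Definition nneg (t : int) : nat := (if (0 <= t)%R then 0 else `|t|%N) + 1.

Lemma npos_sub_nneg t : ((npos t)%:Z - (nneg t)%:Z)%R = t.
Proof. by rewrite /npos /nneg; case: ifP; lia. Qed.

Section Realizer.
Variables (d0 : int) (ds : seq int).
Local Notation k := (size ds).

Definition leaf_charge (j : nat) : int :=
  if j is i.+1 then (ds`_i - 1)%R else (d0 - k%:Z)%R.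

Definition leaves (j : nat) : seq (nat * bool) :=
  nseq (npos (leaf_charge j)) (j, true) ++ nseq (nneg (leaf_charge j)) (j, false).

(* Vertices 1..k are positive children of the root 0; the leaves hung on a
   core vertex j bring its signed degree to d0 if j = 0, to ds`_(j-1) otherwise. *)
Definition all_leaves := flatten [seq leaves j | j <- iota 0 k.+1].
Definition realizer := nseq k (0, true) ++ all_leaves.

Local Notation V := 'I_(size realizer).+1.
Local Notation e := (@ptree_edge realizer).
Local Notation s := (@ptree_signs realizer).

Lemma mem_all_leaves x : x \in all_leaves -> x.1 <= k.
Proof.
case/flattenP=> l /mapP[j]; rewrite mem_iota => /= hj ->.
by rewrite mem_cat !mem_nseq => /orP[] /andP[_ /eqP ->].
Qed.

Lemma realizer_nth i : nth (0, true) realizer i =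
  if i < k then (0, true) else nth (0, true) all_leaves (i - k).
Proof. by rewrite nth_cat size_nseq nth_nseq if_same. Qed.

Lemma realizer_parent_le v : ptree_parent realizer v <= k.
Proof.
case: v => //= i; rewrite realizer_nth; case: ifP => // _.
have [hi | hi] := ltnP (i - k) (size all_leaves); last by rewrite nth_default.
exact/mem_all_leaves/mem_nth.
Qed.

Lemma realizer_parent_core v : 0 < v <= k -> ptree_parent realizer v = 0.
Proof. by case: v => //= i hi; rewrite realizer_nth hi. Qed.

Lemma realizer_parent_lt v : 0 < v -> ptree_parent realizer v < v.
Proof.
move=> hv; have [hvk | hkv] := leqP v k; first by rewrite realizer_parent_core ?hv.
exact: leq_ltn_trans (realizer_parent_le v) hkv.
Qed.

Lemma leaves_charge j v :
  (\sum_(x <- leaves j | x.1 == v) sgnb x.2)%R = if j == v then leaf_charge j else 0%R.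
Proof.
rewrite big_cat !big_nseq_cond /=; case: eqP => _; last by rewrite addr0.
by rewrite !iter_addr_0 mulNrn !natz npos_sub_nneg.
Qed.

Lemma all_leaves_charge v :
  (\sum_(x <- all_leaves | x.1 == v) sgnb x.2)%R = if v <= k then leaf_charge v else 0%R.
Proof.
rewrite big_flatten big_map; under eq_bigr => j _ do rewrite leaves_charge.
by rewrite -big_mkcond -[iota 0 k.+1]/(index_iota 0 k.+1) big_nat1_eq ltnS.
Qed.

Lemma sdeg_realizer (v : V) : sdeg e s v =
  if v == 0 :> nat then d0 else if v <= k then (ds`_v.-1)%R else sgnb (ptree_sign realizer v).
Proof.
rewrite sdeg_ptree; last exact: realizer_parent_lt.
rewrite big_cat big_nseq_cond all_leaves_charge /=.
case: v => -[|i] _ /=; first by rewrite iter_addr_0 natz add0r addrC subrK.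
by rewrite realizer_nth; case: ifP => _; rewrite add0r ?addr0 // addrC subrK.
Qed.

Lemma realizer_leaf x : x \in all_leaves -> exists v : V, sdeg e s v = sgnb x.2.
Proof.
move=> hx; have hidx : index x all_leaves < size all_leaves by rewrite index_mem.
have hv : k.+1 + index x all_leaves < (size realizer).+1.
  by rewrite /realizer size_cat size_nseq; lia.
exists (Ordinal hv); rewrite sdeg_realizer /= ifF; last by lia.
by rewrite realizer_nth ifF ?addKn ?nth_index //; lia.
Qed.

Lemma root_leaves_in b : (0, b) \in all_leaves.
Proof.
apply/flattenP; exists (leaves 0); first exact/map_f/mem_iota.
by rewrite mem_cat !mem_nseq /npos /nneg !addn1; case: b.
Qed.

Lemma realizer_realizes : realizes e s [:: 1, -1, d0 & ds]%R.
Proof.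
move=> d; split; last first.
  case=> v <-; rewrite sdeg_realizer; case: ifP => [_|hv0].
    by rewrite !inE eqxx !orbT.
  case: ifP => hvk; last by case: (ptree_sign _ _); rewrite !inE eqxx ?orbT.
  by rewrite !inE mem_nth ?orbT //; case: (nat_of_ord v) hv0 hvk.
rewrite !inE => /or4P[/eqP-> | /eqP-> | /eqP-> | hd].
- exact: realizer_leaf (root_leaves_in true).
- exact: realizer_leaf (root_leaves_in false).
- by exists ord0; rewrite sdeg_realizer.
have hv : (index d ds).+1 < (size realizer).+1.
  by rewrite ltnS /realizer size_cat size_nseq ltn_addr // index_mem.
by exists (Ordinal hv); rewrite sdeg_realizer /= index_mem hd nth_index.
Qed.

Lemma realizer_near_core (u : V) :
  exists2 a : V, a <= k & exists2 j, j <= 1 & walk_of_len e u a j.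
Proof.
have [huk | hku] := leqP u k; first by exists u => //; exists 0 => //; apply: walk_of_len0.
have hp : ptree_parent realizer u < (size realizer).+1.
  exact: leq_ltn_trans (realizer_parent_le u) (ltn_trans hku (ltn_ord u)).
exists (Ordinal hp); first exact: realizer_parent_le.
exists 1 => //; apply: walk_of_len1.
by apply: (ptree_edge_parent realizer_parent_lt) => //; lia.
Qed.

Lemma realizer_core_walk (a b : V) : a <= k -> b <= k ->
  exists2 j, j <= minn k 2 & walk_of_len e a b j.
Proof.
move=> hak hbk.
have to_root (c : V) : 0 < c <= k -> e c ord0.
  move=> hc; apply: (ptree_edge_parent realizer_parent_lt); first by case/andP: hc.
  by rewrite realizer_parent_core.
have [<- | hab] := eqVneq a b; first by exists 0 => //; apply: walk_of_len0.
have hab' : a != b :> nat by [].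
have [a0 | ha0] := posnP a.
  exists 1; first by rewrite leq_min; lia.
  have -> : a = ord0 by apply/val_inj; rewrite /= a0.
  by apply: walk_of_len1; rewrite ptree_edge_sym to_root //; lia.
have [b0 | hb0] := posnP b.
  exists 1; first by rewrite leq_min; lia.
  have -> : b = ord0 by apply/val_inj; rewrite /= b0.
  by apply: walk_of_len1; rewrite to_root ?ha0.
exists 2; first by rewrite leq_min; lia.
apply: (walk_of_lenS (v := ord0)); first by rewrite to_root ?ha0.
by apply: walk_of_len1; rewrite ptree_edge_sym to_root ?hb0.
Qed.

Lemma realizer_diameter : diameter e <= (minn k 2).+2.
Proof.
apply: diameter_le_walks => u v.
have [a ha [i hi hua]] := realizer_near_core u.
have [b hb [l hl hvb]] := realizer_near_core v.
have [j hj hab] := realizer_core_walk ha hb.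
exists (i + j + l); first by lia.
apply: walk_of_len_cat (walk_of_len_cat hua hab) _.
exact: walk_of_len_sym (@ptree_edge_sym realizer) hvb.
Qed.
End Realizer.

Theorem diam_of_set_pm1 (z : seq int) : z != [::] -> uniq z ->
  (forall x, x \in z -> x != 1%R /\ x != (-1)%R) ->
  diam_of_set_is [:: 1, -1 & z]%R (minn (size z) 3).+1.
Proof.
case: z => [|d0 ds] // _ hu hz; split; last first.
  by move=> m e s htree hD; exact: diameter_lower_bound htree hD hu isT hz.
have htree := ptree_signed_tree (@realizer_parent_lt d0 ds).
have hD := @realizer_realizes d0 ds.
exists _, (@ptree_edge (realizer d0 ds)), (@ptree_signs (realizer d0 ds)).
split; [exact: htree | split; first exact: hD].
apply/eqP; rewrite eqn_leq (diameter_lower_bound htree hD) // andbT.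
by apply: leq_trans (realizer_diameter d0 ds) _; rewrite /= minnSS.
Qed.

Theorem mainTheorem7 (n : nat) (z : seq int) :
  (1 <= n)%N -> size z = n -> uniq z ->
  (forall x, x \in z -> x != 1%R /\ x != (-1)%R) ->
  let D := (1%R :: (-1)%R :: z) in
  (n = 1%N -> diam_of_set_is D 2) /\
  (n = 2%N -> diam_of_set_is D 3) /\
  ((2 < n)%N -> diam_of_set_is D 4).
Proof.
move=> hn hsize hu hz D.
have hz0 : z != [::] by rewrite -size_eq0 hsize -lt0n.
have := diam_of_set_pm1 hz0 hu hz; rewrite hsize => hD.
split; first by move=> hn1; rewrite hn1 in hD.
split; first by move=> hn2; rewrite hn2 in hD.
by move=> /minn_idPr hn3; rewrite hn3 in hD.
Qed.
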